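(* Let $n \ge 1$ and let $m$ be an even positive integer such that $\Delta_{n,m} \neq \emptyset$, i.e. there exists a positive semidefinite form in $n$ real variables of degree $m$ that is not a sum of squares of forms. Then there does not exist a non-zero form $h \in H_d(\mathbb{R}^n)$ (for any $d$) such that $hp$ is a sum of squares for every $p \in P_{n,m}$.
   Context: $H_d(\mathbb{R}^n)$ denotes the real vector space of real homogeneous forms of degree $d$ in $n$ variables $x_1,\dots,x_n$. For even $m$, $P_{n,m}$ is the set of forms $p \in H_m(\mathbb{R}^n)$ that are positive semidefinite (psd), i.e. $p(x) \ge 0$ for all $x \in \mathbb{R}^n$. A form is a sum of squares (sos) if it can be written as $\sum_k h_k^2$ with each $h_k$ a real polynomial. $\Sigma_{n,m} \subseteq P_{n,m}$ is the set of sos forms in $H_m(\mathbb{R}^n)$, and $\Delta_{n,m} = P_{n,m} \setminus \Sigma_{n,m}$. *)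

From HB Require Import structures.
From mathcomp Require Import all_boot all_order all_algebra.
From mathcomp Require Import reals.
From mathcomp Require Import mpoly.
Set Implicit Arguments. Unset Strict Implicit. Unset Printing Implicit Defensive.
Import Order.TTheory GRing.Theory Num.Theory.
Local Open Scope ring_scope.

(* Real forms in n variables x_0..x_{n-1}: elements of {mpoly R[n]}, with
   R : realType (the real numbers); p is a form of degree d iff p \is d.-homog
   (total degree, mdeg).  The zero polynomial is a form of every degree. *)

Definition psd (R : realType) (n : nat) (p : {mpoly R[n]}) : Prop :=
  forall x : 'I_n -> R, 0 <= p.@[x].

Definition sos (R : realType) (n : nat) (p : {mpoly R[n]}) : Prop :=
  exists s : seq {mpoly R[n]}, p = \sum_(h <- s) h ^+ 2.

Definition in_P (R : realType) (n m : nat) (p : {mpoly R[n]}) : Prop :=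
  p \is m.-homog /\ psd p.

Definition in_Delta (R : realType) (n m : nat) (p : {mpoly R[n]}) : Prop :=
  in_P m p /\ ~ sos p.

From HB Require Import structures.
From mathcomp Require Import all_boot all_order all_algebra.
From mathcomp Require Import reals.
From mathcomp Require Import mpoly.
From mathcomp Require Import classical_sets boolp topology normedtype derive.
Set Implicit Arguments. Unset Strict Implicit. Unset Printing Implicit Defensive.
Import Order.TTheory GRing.Theory Num.Theory.
Import numFieldNormedType.Exports.
Local Open Scope ring_scope.

(* Call h a multiplier if h p is a sum of squares for every p in P_{n,m}.
   Diagonal substitutions x_i -> t x_i preserve P_{n,m}, hence multipliers, and
   multipliers of bounded degree form a closed set: the cone of sums of squares of
   bounded degree is closed, since by Caratheodory a bounded number of squares
   suffices and the map from their coefficients to the sum of their squares is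
   quadratic, continuous and vanishes only at 0, hence proper.  Letting t -> 0 in
   t^-a h(.., t x_i, ..) shows that the part of h of lowest degree in x_i is again a
   multiplier, so some monomial c x^a is one, and testing it on x_1^m gives c > 0.
   If every a_i is even, c x^a p can only be a sum of squares if p is one: if
   x_i^2 q = sum f_j^2, setting x_i = 0 shows that x_i divides every f_j, so
   q = sum (f_j / x_i)^2.  If some a_i is odd, the substitution x_i -> -x_i shows that -c x^a p is
   a sum of squares as well, which forces p = 0.  Either way Delta_{n,m} is empty. *)

Section Coefficients.
Variables (R : comNzRingType) (n : nat).
Implicit Types (p q : {mpoly R[n]}).

Lemma mcoeff_sum (I : Type) (r : seq I) (P : pred I) (F : I -> {mpoly R[n]}) k :
  (\sum_(i <- r | P i) F i)@_k = \sum_(i <- r | P i) (F i)@_k.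
Proof. exact: raddf_sum. Qed.

Lemma mpolyX_neq0 (m : 'X_{1..n}) : 'X_[m] != 0 :> {mpoly R[n]}.
Proof.
by apply/eqP => /(congr1 (mcoeff m)); rewrite mcoeffX eqxx mcoeff0; apply/eqP/oner_neq0.
Qed.

Lemma msize_le_msupp p q : {subset msupp p <= msupp q} -> (msize p <= msize q)%N.
Proof.
move=> supp_pq; rewrite [msize p]msizeE; apply/bigmax_leqP_seq => m m_supp _.
exact/msize_mdeg_lt/supp_pq.
Qed.

Lemma mpolyE_monomial p :
  (forall i, exists a, forall m, m \in msupp p -> m i = a) -> p = p@_(mlead p) *: 'X_[mlead p].
Proof.
move=> exps_const; have [-> | p_neq0] := eqVneq p 0; first by rewrite mcoeff0 scale0r.
have supp_lead m : m \in msupp p -> m = mlead p.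
  move=> m_supp; apply/mnmP => i; have [a exp_a] := exps_const i.
  by rewrite (exp_a _ m_supp) (exp_a _ (mlead_supp p_neq0)).
apply/mpolyP => m; rewrite mcoeffZ mcoeffX.
have [<- | m_neq] := eqVneq (mlead p) m; first by rewrite mulr1.
by rewrite mulr0 memN_msupp_eq0 //; apply: contra m_neq => /supp_lead ->.
Qed.

Lemma mcoeff_msupp_sumZ p (d : 'X_{1..n} -> R) k :
  (\sum_(m <- msupp p) (p@_m * d m) *: 'X_[m])@_k = p@_k * d k.
Proof.
rewrite mcoeff_sum [in RHS](mpolyE p) mcoeff_sum big_distrl /=.
apply: eq_bigr => m _; rewrite !mcoeffZ mcoeffX.
by case: eqP => [-> | _]; rewrite ?mulr1 ?mulr0 ?mul0r.
Qed.

Definition mpart (P : pred 'X_{1..n}) p :=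
  \sum_(m <- msupp p) (p@_m * (P m)%:R) *: 'X_[m].

Lemma mcoeff_mpart P p k : (mpart P p)@_k = p@_k * (P k)%:R.
Proof. exact: mcoeff_msupp_sumZ. Qed.

(* [m - U_(i)] is truncated, so this is p / x_i only if x_i divides p. *)
Definition mdivX (i : 'I_n) p := \sum_(m <- msupp p) p@_m *: 'X_[m - U_(i)].

Lemma mulX_mdivX i p :
  (forall m, m \in msupp p -> m i != 0%N) -> 'X_i * mdivX i p = p.
Proof.
move=> p_div; rewrite /mdivX mulr_sumr [RHS]mpolyE !big_seq; apply: eq_bigr => m m_supp.
by rewrite -scalerAr -mpolyXD addmC submK // lep1mP p_div.
Qed.

End Coefficients.

Lemma norm_mcoeff_le_sum (R : numDomainType) n (p : {mpoly R[n]}) k :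
  `|p@_k| <= \sum_(m <- msupp p) `|p@_m|.
Proof.
have [k_supp | /memN_msupp_eq0 ->] := boolP (k \in msupp p); last by rewrite normr0 sumr_ge0.
by rewrite (big_rem k k_supp) /= lerDl sumr_ge0.
Qed.

Section SumsOfSquaresCoefficients.
Variables (R : realDomainType) (n : nat).
Implicit Types (s : seq {mpoly R[n]}).

Lemma exists_mlead_max s : has (fun h => h != 0) s ->
  exists2 h0, h0 \in s & h0 != 0 /\
    forall h, h \in s -> h != 0 -> (mlead h <= mlead h0)%O.
Proof.
case/hasP=> h hs h_neq0.
pose nz (i : 'I_(size s)) := s`_i != 0.
have idx h' : h' \in s -> (index h' s < size s)%N by rewrite index_mem.
have [i0 i0_nz maxE] : {i0 | nz i0 &
    \big[Order.max/0%MM]_(i | nz i) mlead s`_i = mlead s`_i0}.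
  by apply: (eq_bigmax (Ordinal (idx h hs))) => [|i _]; rewrite ?le0m // /nz /= nth_index.
exists s`_i0; first exact: mem_nth.
split=> // h' h's h'_neq0; rewrite -maxE -(nth_index 0 h's).
apply: (@le_bigmax_cond _ _ _ 0%MM (Ordinal (idx h' h's)) nz (fun i => mlead s`_i)).
by rewrite /nz /= nth_index.
Qed.

Lemma sumsq_lead s : has (fun h => h != 0) s ->
  exists mu : 'X_{1..n}, 0 < (\sum_(h <- s) h ^+ 2)@_(mu + mu) /\
    forall h, h \in s -> h != 0 -> (mlead h <= mu)%O.
Proof.
move=> /exists_mlead_max [h0 h0s [h0_neq0 h0_max]].
exists (mlead h0); split=> //.
have sq_coef_ge0 h : h \in s -> 0 <= (h ^+ 2)@_(mlead h0 + mlead h0).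
  move=> hs; have [-> | h_neq0] := eqVneq h 0; first by rewrite expr0n mcoeff0.
  have [<- | neq] := eqVneq (mlead h) (mlead h0).
    by rewrite expr2 mleadcM -expr2 sqr_ge0.
  have lt_h : (mlead h < mlead h0)%O by rewrite lt_neqAle neq h0_max.
  by rewrite mcoeff_gt_mlead // expr2 mleadM // ltm_add.
rewrite mcoeff_sum (big_rem h0 h0s) /= expr2 mleadcM -expr2.
rewrite ltr_pwDl ?exprn_even_gt0 ?mleadc_eq0 // big_seq.
by apply: sumr_ge0 => h /mem_rem /sq_coef_ge0.
Qed.

Lemma sumsq_eq0 s : \sum_(h <- s) h ^+ 2 = 0 -> forall h, h \in s -> h = 0.
Proof.
move=> sum0 h hs; apply/eqP/negPn/negP => h_neq0.
have /sumsq_lead [mu [+ _]] : has (fun h => h != 0) s by apply/hasP; exists h.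
by rewrite sum0 mcoeff0 ltxx.
Qed.

Lemma msize_sumsq s k : (msize (\sum_(h <- s) h ^+ 2) <= (k + k).+1)%N ->
  forall h, h \in s -> (msize h <= k.+1)%N.
Proof.
move=> size_sum h hs; have [-> | h_neq0] := eqVneq h 0; first by rewrite msize0.
have /sumsq_lead [mu [mu_gt0 mu_max]] : has (fun h => h != 0) s.
  by apply/hasP; exists h.
have /msize_mdeg_lt : (mu + mu)%MM \in msupp (\sum_(h <- s) h ^+ 2).
  by rewrite mcoeff_msupp gt_eqF.
move=> /leq_trans /(_ size_sum); rewrite mdegD ltnS !addnn leq_double => deg_mu.
by rewrite -(mlead_deg h_neq0) ltnS (leq_trans (lemc_mdeg (mu_max _ hs h_neq0))).
Qed.

Lemma sumsq_scaleX_gt0 s (c : R) (m : 'X_{1..n}) :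
  \sum_(h <- s) h ^+ 2 = c *: 'X_[m] -> c != 0 -> 0 < c.
Proof.
move=> sumE c_neq0.
have [s_nz | /hasPn s_zero] := boolP (has (fun h => h != 0) s); last first.
  suff /(congr1 (mcoeff m)) : c *: 'X_[m] = 0 :> {mpoly R[n]}.
    by rewrite mcoeffZ mcoeffX eqxx mulr1 mcoeff0 => /eqP; rewrite (negPf c_neq0).
  by rewrite -sumE big_seq big1 // => h /s_zero /negPn /eqP ->; rewrite expr0n.
have [mu [+ _]] := sumsq_lead s_nz.
by rewrite sumE mcoeffZ mcoeffX; case: eqP => _; rewrite ?mulr1 ?mulr0 ?ltxx.
Qed.

End SumsOfSquaresCoefficients.

Section DiagonalScaling.
Variables (R : comNzRingType) (n : nat).
Implicit Types (p q : {mpoly R[n]}) (u v : 'I_n -> R).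

Definition mscale v : {mpoly R[n]} -> {mpoly R[n]} :=
  comp_mpoly [tuple v i *: 'X_i | i < n].

HB.instance Definition _ v :=
  GRing.RMorphism.copy (mscale v) (comp_mpoly [tuple v i *: 'X_i | i < n]).

Lemma mscale_sumsq v (s : seq {mpoly R[n]}) :
  mscale v (\sum_(h <- s) h ^+ 2) = \sum_(h <- s) mscale v h ^+ 2.
Proof. by rewrite rmorph_sum; apply: eq_bigr => h _; rewrite rmorphXn. Qed.

Lemma mscaleXU v i : mscale v 'X_i = v i *: 'X_i.
Proof. by rewrite /mscale comp_mpolyXU -tnth_nth tnth_mktuple. Qed.

Lemma mscaleX v m : mscale v 'X_[m] = (\prod_(i < n) v i ^+ m i) *: 'X_[m].
Proof.
rewrite /mscale comp_mpolyX [in RHS]mpolyXE_id -scaler_prod.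
by apply: eq_bigr => i _; rewrite tnth_mktuple exprZn.
Qed.

Lemma mscaleE v p :
  mscale v p = \sum_(m <- msupp p) (p@_m * \prod_(i < n) v i ^+ m i) *: 'X_[m].
Proof.
rewrite {1}(mpolyE p) /mscale (big_morph _ (comp_mpolyD _) (comp_mpoly0 _)).
apply: eq_bigr => m _.
by rewrite comp_mpolyZ -/(mscale v _) mscaleX scalerA.
Qed.

Lemma mcoeff_mscale v p k : (mscale v p)@_k = p@_k * \prod_(i < n) v i ^+ k i.
Proof. by rewrite mscaleE mcoeff_msupp_sumZ. Qed.

Lemma meval_mscale v p x : (mscale v p).@[x] = p.@[fun i => v i * x i].
Proof.
rewrite /mscale comp_mpoly_meval; apply: meval_eq => i.
by rewrite tnth_mktuple mevalZ mevalXU.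
Qed.

Definition xscale (i : 'I_n) (t : R) : 'I_n -> R := fun j => if j == i then t else 1.

Lemma mcoeff_mscale_xscale i t p k : (mscale (xscale i t) p)@_k = p@_k * t ^+ k i.
Proof.
rewrite mcoeff_mscale (bigD1 i) //= big1 => [|j j_neq_i]; first by rewrite /xscale eqxx mulr1.
by rewrite /xscale (negPf j_neq_i) expr1n.
Qed.

Lemma mscaleM v p q : mscale v (p * q) = mscale v p * mscale v q.
Proof. exact: rmorphM. Qed.

Lemma mscaleK u v p : (forall i, v i * u i = 1) -> mscale u (mscale v p) = p.
Proof.
move=> uv1; apply/mpolyP => m; rewrite !mcoeff_mscale -mulrA -big_split /=.
by rewrite big1 ?mulr1 // => i _; rewrite -exprMn uv1 expr1n.
Qed.

Lemma mscale_homog v d p : p \is d.-homog -> mscale v p \is d.-homog.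
Proof.
move=> /dhomogP p_homog; apply/dhomogP => m; rewrite mcoeff_msupp mcoeff_mscale => coef_neq0.
by apply: p_homog; rewrite mcoeff_msupp; apply: contraNneq coef_neq0 => ->; rewrite mul0r.
Qed.

End DiagonalScaling.

Section SumsOfSquares.
Variables (R : realType) (n : nat).
Implicit Types (p : {mpoly R[n]}).

Lemma sos0 : sos (0 : {mpoly R[n]}).
Proof. by exists [::]; rewrite big_nil. Qed.

Lemma sosZ (c : R) p : 0 <= c -> sos p -> sos (c *: p).
Proof.
move=> c_ge0 [s ->]; exists [seq Num.sqrt c *: h | h <- s].
rewrite big_map scaler_sumr; apply: eq_bigr => h _.
by rewrite exprZn sqr_sqrtr.
Qed.

Lemma sos_rmorph (f : {rmorphism {mpoly R[n]} -> {mpoly R[n]}}) p :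
  sos p -> sos (f p).
Proof.
move=> [s ->]; exists [seq f h | h <- s].
by rewrite rmorph_sum big_map; apply: eq_bigr => h _; rewrite rmorphXn.
Qed.

Lemma sos_mscale v p : sos p -> sos (mscale v p).
Proof. exact: (sos_rmorph (comp_mpoly [tuple v i *: 'X_i | i < n])). Qed.

Lemma in_P_Xn i m : ~~ odd m -> in_P m ('X_i ^+ m : {mpoly R[n]}).
Proof.
move=> m_even; split=> [|x]; last by rewrite rmorphXn /= mevalXU exprn_even_ge0.
by have := @dhomogMn _ _ mdeg 1 'X_i m; rewrite mul1n; apply; rewrite dhomogX; apply/eqP/mdeg1.
Qed.

Lemma in_P_mscale v m p : in_P m p -> in_P m (mscale v p).
Proof.
by move=> [p_homog p_psd]; split=> [|x]; rewrite ?mscale_homog ?meval_mscale.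
Qed.

Lemma sos_mulX2 i p : sos ('X_i ^+ 2 * p) -> sos p.
Proof.
move=> [s sumE]; pose v := xscale i (0 : R).
have vX : mscale v 'X_i = 0 by rewrite mscaleXU /v /xscale eqxx scale0r.
have h_vanish h : h \in s -> mscale v h = 0.
  move=> hs; apply: (sumsq_eq0 (s := [seq mscale v h | h <- s])); last exact: map_f.
  by rewrite big_map -mscale_sumsq -sumE mscaleM expr2 mscaleM vX !mul0r.
have h_divX h : h \in s -> 'X_i * mdivX i h = h.
  move=> hs; apply: mulX_mdivX => m; rewrite mcoeff_msupp; apply: contra => /eqP m_i0.
  have := congr1 (mcoeff m) (h_vanish h hs).
  by rewrite mcoeff_mscale_xscale m_i0 mulr1 mcoeff0 => ->.
exists [seq mdivX i h | h <- s].
have X2_neq0 : ('X_i : {mpoly R[n]}) ^+ 2 != 0 by rewrite expf_neq0 // mpolyX_neq0.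
apply: (mulfI X2_neq0); rewrite sumE big_map mulr_sumr !big_seq.
by apply: eq_bigr => h hs; rewrite -exprMn h_divX.
Qed.

Lemma sos_mulX2n i k p : sos ('X_i ^+ k.*2 * p) -> sos p.
Proof.
elim: k => [|k IH]; first by rewrite expr0 mul1r.
by rewrite doubleS !exprS !mulrA -expr2 -mulrA => /sos_mulX2 /IH.
Qed.

Lemma sos_mulX_even (m : 'X_{1..n}) p :
  (forall i, ~~ odd (m i)) -> sos ('X_[m] * p) -> sos p.
Proof.
move=> m_even; rewrite mpolyXE_id.
under eq_bigr => i _ do rewrite -[m i]odd_double_half (negPf (m_even i)) add0n.
elim: (index_enum _) p => [|i r IH] p; first by rewrite big_nil mul1r.
by rewrite big_cons -mulrA => /sos_mulX2n /IH.
Qed.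

End SumsOfSquares.

Lemma continuous_sumr (T : topologicalType) (R : realType) (I : Type) (r : seq I)
    (F : I -> T -> R) :
  (forall i, continuous (F i)) -> continuous (fun x => \sum_(i <- r) F i x).
Proof.
by move=> F_cont; apply: continuous_big => [|i _]; [exact: add_continuous | exact: F_cont].
Qed.

Lemma continuous_mulr (T : topologicalType) (R : realType) (F G : T -> R) :
  continuous F -> continuous G -> continuous (fun x => F x * G x).
Proof. by move=> F_cont G_cont x; exact: continuousM (F_cont x) (G_cont x). Qed.

Local Open Scope classical_set_scope.

Lemma continuous_sum_norm (R : realType) (T : topologicalType) (I : finType)
    (F : I -> T -> R) :
  (forall i, continuous (F i)) -> continuous (fun x => \sum_i `|F i x|).
Proof.
move=> F_cont; apply: continuous_sumr => i x.
by apply: continuous_comp; [exact: F_cont | exact: norm_continuous].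
Qed.

Lemma rV_ball_compact (R : realType) (P : nat) (B : R) :
  compact [set c : 'rV[R]_P | `|c| <= B].
Proof.
apply: bounded_closed_compact.
  by exists B; split=> [|x B_lt_x c /= /le_trans->]; rewrite ?num_real ?ltW.
exact: (preimage_closed (fun c _ => @norm_continuous _ _ c)) (@closed_le _ B).
Qed.

Lemma rV_sphere_compact (R : realType) (P : nat) : compact [set c : 'rV[R]_P | `|c| = 1].
Proof.
have closed_sphere : closed [set c : 'rV[R]_P | `|c| = 1].
  exact: (preimage_closed (fun c _ => @norm_continuous _ _ c)) (@closed_eq _ 1).
have sphere_sub : [set c : 'rV[R]_P | `|c| = 1] `<=` [set c | `|c| <= 1] by move=> c /= ->.
exact: subclosed_compact closed_sphere (@rV_ball_compact R P 1) sphere_sub.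
Qed.

Section QuadraticImageClosed.
Variables (R : realType) (P : nat) (I : finType) (phi : I -> 'rV[R]_P -> R).
Hypothesis phi_cont : forall i, continuous (phi i).
Hypothesis phiZ : forall i a c, phi i (a *: c) = a ^+ 2 * phi i c.
Hypothesis phi_eq0 : forall c, (forall i, phi i c = 0) -> c = 0.

Lemma quadratic_coercive :
  exists2 d : R, 0 < d & forall c, d * `|c| ^+ 2 <= \sum_i `|phi i c|.
Proof.
(* d is the minimum of the right-hand side on the unit sphere. *)
pose psi c := \sum_i `|phi i c|.
have psiZ a c : psi (a *: c) = a ^+ 2 * psi c.
  rewrite /psi mulr_sumr; apply: eq_bigr => i _.
  by rewrite phiZ normrM ger0_norm ?sqr_ge0.
pose S := [set c : 'rV[R]_P | `|c| = 1].
have normalize c : c != 0 -> S (`|c|^-1 *: c).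
  by move=> c_neq0; rewrite /S /= normrZ normrV ?unitfE ?normr_eq0 // normr_id mulVf ?normr_eq0.
have [[c0 Sc0] | S0] := pselect (S !=set0); last first.
  exists 1 => // c; have [-> | /normalize Sc] := eqVneq c 0.
    by rewrite normr0 expr0n mulr0 sumr_ge0.
  by exfalso; apply: S0; exists (`|c|^-1 *: c).
have [c1 /set_mem S_c1 c1_min] := compact_EVT_min (ex_intro _ c0 Sc0)
  (@rV_sphere_compact R P) (continuous_subspaceT (continuous_sum_norm phi_cont)).
exists (psi c1).
  rewrite lt_neqAle sumr_ge0 // andbT eq_sym psumr_eq0 //.
  apply/allP => /= phi_c1_eq0; have c1_0 : c1 = 0.
    apply: phi_eq0 => i; apply/eqP; rewrite -normr_eq0.
    by apply: phi_c1_eq0; rewrite mem_index_enum.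
  by move: S_c1; rewrite /S /= c1_0 normr0 => /eqP; rewrite eq_sym oner_eq0.
move=> c; have [-> | c_neq0] := eqVneq c 0; first by rewrite normr0 expr0n mulr0 sumr_ge0.
have -> : c = `|c| *: (`|c|^-1 *: c) by rewrite scalerA divff ?normr_eq0 // scale1r.
rewrite -/(psi _) psiZ normrZ (normalize c c_neq0) normr_id mulr1 mulrC.
by rewrite ler_wpM2l ?sqr_ge0 // c1_min // inE; apply: normalize.
Qed.

Lemma quadratic_image_closed (y : I -> R) :
  (forall eps : R, 0 < eps -> exists c, forall i, `|phi i c - y i| <= eps) ->
  exists c, forall i, phi i c = y i.
Proof.
(* Approximate preimages lie in the ball of radius sqrt (C / d), so a minimiser of
   the error on that compact ball is an exact preimage. *)
move=> approx; have [d d_gt0 coercive] := quadratic_coercive.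
pose C := \sum_i (`|y i| + 1).
have C_ge0 : 0 <= C by apply: sumr_ge0 => i _; rewrite addr_ge0.
pose K := [set c : 'rV[R]_P | `|c| <= Num.sqrt (C / d)].
pose err c := \sum_i `|phi i c - y i|.
have err_cont : continuous err.
  apply: continuous_sum_norm => i c; apply: continuousB; first exact: phi_cont.
  exact: cst_continuous.
have K0 : K !=set0 by exists 0; rewrite /K /= normr0 sqrtr_ge0.
have [c1 _ c1_min] :=
  compact_EVT_min K0 (@rV_ball_compact R P _) (continuous_subspaceT err_cont).
have err_c1 : err c1 <= 0.
  apply/ler_addgt0Pr => e e_gt0; rewrite add0r.
  pose N : R := #|I|%:R.
  pose eps := Num.min 1 (e / (N + 1)).
  have eps_gt0 : 0 < eps by rewrite lt_min ltr01 divr_gt0 // ltr_wpDl.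
  have eps_le1 : eps <= 1 by rewrite ge_min lexx.
  have eps_le : eps <= e / (N + 1) by rewrite ge_min lexx orbT.
  have [c c_approx] := approx eps eps_gt0.
  have c_K : K c.
    rewrite /K /=; have -> : `|c| = Num.sqrt (`|c| ^+ 2) by rewrite sqrtr_sqr normr_id.
    rewrite ler_sqrt ?divr_ge0 ?(ltW d_gt0) // ler_pdivlMr //.
    rewrite mulrC; apply: le_trans (coercive c) _; apply: ler_sum => i _.
    rewrite -[phi i c](subrK (y i)) (le_trans (ler_normD _ _)) // addrC lerD2l.
    exact: le_trans (c_approx i) eps_le1.
  apply: le_trans (c1_min c _) _; first by rewrite inE.
  apply: le_trans (ler_sum _ (fun i _ => c_approx i)) _.
  rewrite sumr_const -mulr_natr mulrC.
  apply: le_trans (ler_wpM2l (ler0n _ _) eps_le) _.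
  by rewrite mulrCA ger_pMr // ler_pdivrMr ?ltr_wpDl // mul1r lerDl.
exists c1 => i; apply/eqP; rewrite -subr_eq0 -normr_eq0 eq_le normr_ge0 andbT.
by apply: le_trans err_c1; rewrite /err (bigD1 i) //= lerDl sumr_ge0.
Qed.

End QuadraticImageClosed.

Local Close Scope classical_set_scope.

Lemma conic_combination_drop (K : realFieldType) (V : lmodType K) L
    (f : 'I_L -> V) (lam : 'I_L -> K) (j0 : 'I_L) :
  lam j0 != 0 -> \sum_j lam j *: f j = 0 ->
  exists jm (w : 'I_L -> K),
    [/\ forall j, 0 <= w j, w jm = 0 & \sum_j w j *: f j = \sum_j f j].
Proof.
(* Caratheodory's step: subtract lam / lam jm, with |lam jm| maximal. *)
move=> lam_j0 lam_dep.
have [jm _ jm_max] := @arg_maxP _ _ 'I_L j0 xpredT (fun j => `|lam j|) isT.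
have lam_jm : lam jm != 0.
  by rewrite -normr_gt0 (lt_le_trans _ (jm_max j0 isT)) ?normr_gt0.
exists jm, (fun j => 1 - lam j / lam jm); split.
- move=> j; rewrite subr_ge0 (le_trans (ler_norm _)) // normrM normrV ?unitfE //.
  by rewrite ler_pdivrMr ?normr_gt0 // mul1r; apply: jm_max.
- by rewrite divff // subrr.
have -> : \sum_j f j = \sum_j f j - (lam jm)^-1 *: \sum_j lam j *: f j.
  by rewrite lam_dep scaler0 subr0.
rewrite scaler_sumr -sumrB.
by apply: eq_bigr => j _; rewrite scalerBl scale1r scalerA mulrC.
Qed.

Section SumsOfSquaresWithFewTerms.
Variables (R : realType) (n : nat).
Implicit Types (p : {mpoly R[n]}) (s : seq {mpoly R[n]}).

Lemma msize_sqr p k : (msize p <= k.+1)%N -> (msize (p ^+ 2) <= (k + k).+1)%N.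
Proof.
have [-> | p_neq0] := eqVneq p 0; first by rewrite expr0n msize0.
rewrite expr2 msizeM // => size_p.
by have := leq_add size_p size_p; rewrite addSn addnS; case: (msize p + msize p)%N.
Qed.

Lemma mpoly_lin_dep K L (f : 'I_L -> {mpoly R[n]}) :
  (#|{: 'X_{1..n < K}}| < L)%N -> (forall j, msize (f j) <= K)%N ->
  exists2 lam : 'rV[R]_L, lam != 0 & \sum_j lam 0 j *: f j = 0.
Proof.
move=> L_big f_bnd.
pose A := \matrix_(j < L, r < #|{: 'X_{1..n < K}}|) (f j)@_(enum_val r).
exists (nz_row (kermx A)).
  rewrite nz_row_eq0 -mxrank_eq0 mxrank_ker subn_eq0 -ltnNge.
  exact: leq_ltn_trans (rank_leq_col A) L_big.
have lamA : nz_row (kermx A) *m A = 0 by apply/sub_kermxP/nz_row_sub.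
apply/mpolyP => m; rewrite mcoeff0 mcoeff_sum.
have [m_small | m_big] := ltnP (mdeg m) K.
  have := congr1 (fun B : 'M[R]_(1, _) => B 0 (enum_rank (BMultinom m_small))) lamA.
  rewrite !mxE => lamA_m; rewrite -[RHS]lamA_m; apply: eq_bigr => j _.
  by rewrite mcoeffZ !mxE enum_rankK.
apply: big1 => j _; rewrite mcoeffZ memN_msupp_eq0 ?mulr0 //.
by apply: msize_mdeg_ge; apply: leq_trans m_big.
Qed.

Lemma sumsq_drop k s : (#|{: 'X_{1..n < (k + k).+1}}| < size s)%N ->
  (forall h, h \in s -> msize h <= k.+1)%N ->
  exists s', [/\ size s' = (size s).-1, (forall h, h \in s' -> msize h <= k.+1)%N &
    \sum_(h <- s) h ^+ 2 = \sum_(h <- s') h ^+ 2].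
Proof.
move=> s_long s_bnd; pose f (j : 'I_(size s)) := s`_j ^+ 2.
have f_bnd j : (msize (f j) <= (k + k).+1)%N by apply/msize_sqr/s_bnd/mem_nth.
have [lam lam_neq0 lam_dep] := mpoly_lin_dep s_long f_bnd.
have [j0 lam_j0] : exists j0, lam 0 j0 != 0.
  apply/existsP; rewrite -negb_forall; apply: contra lam_neq0 => /forallP lam0.
  by apply/eqP/rowP => j; rewrite mxE; apply/eqP.
have [jm [w [w_ge0 w_jm w_sum]]] := conic_combination_drop lam_j0 lam_dep.
exists [seq Num.sqrt (w j) *: s`_j | j <- enum (predC1 jm)]; split.
- by rewrite size_map -cardE cardC1 card_ord.
- by move=> _ /mapP [j _ ->]; rewrite (leq_trans (msizeZ_le _ _)) // s_bnd // mem_nth.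
rewrite big_map big_enum (big_nth 0) big_mkord -w_sum [LHS](bigD1 jm) //= w_jm scale0r add0r.
by apply: eq_big => [j | j _]; rewrite ?inE // exprZn sqr_sqrtr.
Qed.

Lemma sumsq_caratheodory k s : (forall h, h \in s -> msize h <= k.+1)%N ->
  exists s', [/\ size s' = #|{: 'X_{1..n < (k + k).+1}}|,
    (forall h, h \in s' -> msize h <= k.+1)%N & \sum_(h <- s) h ^+ 2 = \sum_(h <- s') h ^+ 2].
Proof.
have [l] := ubnP (size s); elim: l s => // l IH s /ltnSE size_s s_bnd.
have [s_long | s_short] := ltnP #|{: 'X_{1..n < (k + k).+1}}| (size s).
  have [s' [size_s' s'_bnd ->]] := sumsq_drop s_long s_bnd.
  apply: IH s'_bnd; rewrite size_s' prednK ?(leq_trans _ s_long) //.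
exists (s ++ nseq (#|{: 'X_{1..n < (k + k).+1}}| - size s) 0); split.
- by rewrite size_cat size_nseq subnKC.
- by move=> h; rewrite mem_cat => /orP [/s_bnd // | /nseqP [-> _]]; rewrite msize0.
rewrite big_cat /= [X in _ = _ + X]big1_seq ?addr0 // => _ /andP [_ /nseqP [-> _]].
by rewrite expr0n.
Qed.

End SumsOfSquaresWithFewTerms.

Section SquaresParametrization.
Variables (R : realType) (n k : nat).
Local Notation T1 := 'X_{1..n < k.+1}.
Local Notation T2 := 'X_{1..n < (k + k).+1}.
Local Notation M := #|{: T2}|.
Local Notation P := #|{: 'I_M * T1}|.
Implicit Types (c : 'rV[R]_P) (F : {mpoly R[n]}).

(* c lists the coefficients of M polynomials of degree at most k, the (j, t) entry
   being the coefficient of x^t in the j-th one; M squares always suffice. *)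
Definition param_poly c (j : 'I_M) : {mpoly R[n]} :=
  \sum_(t : T1) c 0 (enum_rank (j, t)) *: 'X_[t].

Definition param_sumsq c := \sum_(j < M) param_poly c j ^+ 2.

Lemma mcoeff_param_poly c j (t : T1) : (param_poly c j)@_t = c 0 (enum_rank (j, t)).
Proof.
rewrite /param_poly mcoeff_sum (bigD1 t) //= big1 => [|t' t'_neq]; last first.
  by rewrite mcoeffZ mcoeffX val_eqE (negPf t'_neq) mulr0.
by rewrite mcoeffZ mcoeffX eqxx mulr1 addr0.
Qed.

Lemma mcoeff_param_sumsq c mu : (param_sumsq c)@_mu =
  \sum_(j < M) \sum_(t : T1) \sum_(t' : T1)
    c 0 (enum_rank (j, t)) * c 0 (enum_rank (j, t')) * (((t : 'X_{1..n}) + t')%MM == mu)%:R.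
Proof.
rewrite mcoeff_sum; apply: eq_bigr => j _; rewrite expr2 [X in X * _]/param_poly mulr_suml.
rewrite mcoeff_sum; apply: eq_bigr => t _; rewrite /param_poly mulr_sumr mcoeff_sum.
apply: eq_bigr => t' _.
by rewrite -scalerAl -scalerAr scalerA -mpolyXD mcoeffZ mcoeffX.
Qed.

Lemma mcoeff_param_sumsq_out c mu : ((k + k).+1 <= mdeg mu)%N -> (param_sumsq c)@_mu = 0.
Proof.
move=> mu_big; rewrite mcoeff_param_sumsq.
apply: big1 => j _; apply: big1 => t _; apply: big1 => t' _.
case: eqP => [tt'_mu | _]; last by rewrite mulr0.
suff : (mdeg mu < (k + k).+1)%N by rewrite ltnNge mu_big.
by rewrite -tt'_mu mdegD ltnS leq_add // -ltnS bmdeg.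
Qed.

Lemma eq_param_sumsq c F : (forall mu : T2, (param_sumsq c)@_mu = F@_mu) ->
  (forall m, ((k + k).+1 <= mdeg m)%N -> F@_m = 0) -> param_sumsq c = F.
Proof.
move=> eq_small F_big; apply/mpolyP => m.
have [m_small | m_big] := ltnP (mdeg m) (k + k).+1; first exact: (eq_small (BMultinom m_small)).
by rewrite F_big // mcoeff_param_sumsq_out.
Qed.

Lemma continuous_mcoeff_param_sumsq mu : continuous (fun c => (param_sumsq c)@_mu).
Proof.
have -> : (fun c => (param_sumsq c)@_mu) = (fun c => \sum_(j < M) \sum_(t : T1) \sum_(t' : T1)
    c 0 (enum_rank (j, t)) * c 0 (enum_rank (j, t')) * (((t : 'X_{1..n}) + t')%MM == mu)%:R).
  by apply: funext => c; rewrite mcoeff_param_sumsq.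
apply: continuous_sumr => j; apply: continuous_sumr => t; apply: continuous_sumr => t'.
apply: continuous_mulr; last exact: cst_continuous.
by apply: continuous_mulr; apply: coord_continuous.
Qed.

Lemma param_sumsqZ a c : param_sumsq (a *: c) = a ^+ 2 *: param_sumsq c.
Proof.
rewrite /param_sumsq scaler_sumr; apply: eq_bigr => j _; rewrite -exprZn.
by congr (_ ^+ 2); rewrite /param_poly scaler_sumr; apply: eq_bigr => t _; rewrite mxE scalerA.
Qed.

Lemma sos_param_sumsq c : sos (param_sumsq c).
Proof. by exists [seq param_poly c j | j <- enum 'I_M]; rewrite big_map big_enum. Qed.

Lemma param_sumsq_eq0 c : param_sumsq c = 0 -> c = 0.
Proof.
move=> c_sumsq0; apply/rowP => r; rewrite mxE.
have [[j t] ->] : exists jt, r = enum_rank jt by exists (enum_val r); rewrite enum_valK.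
have sumE : \sum_(h <- [seq param_poly c j | j <- enum 'I_M]) h ^+ 2 = 0.
  by rewrite big_map big_enum.
rewrite -(mcoeff_param_poly c j t) (sumsq_eq0 sumE (h := param_poly c j)) ?mcoeff0 //.
by rewrite map_f ?mem_enum.
Qed.

Lemma param_sumsq_surj F : sos F -> (msize F <= (k + k).+1)%N ->
  exists c, F = param_sumsq c.
Proof.
move=> [s ->] size_F.
have [s' [size_s' s'_bnd ->]] := sumsq_caratheodory (msize_sumsq size_F).
exists (\row_(r < P) (s'`_(enum_val r).1)@_((enum_val r).2)).
rewrite (big_nth 0) size_s' big_mkord; apply: eq_bigr => j _; congr (_ ^+ 2).
rewrite [LHS](mpolywE (s'_bnd _ (mem_nth 0 _))) ?size_s' //; apply: eq_bigr => t _.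
by rewrite mxE enum_rankK.
Qed.

End SquaresParametrization.

Lemma sos_closed (R : realType) (n K : nat) (G : {mpoly R[n]}) :
  (forall eps : R, 0 < eps -> exists F, [/\ sos F, (msize F <= K)%N &
     forall m, `|F@_m - G@_m| <= eps]) ->
  sos G.
Proof.
move=> approx.
have G_out m : ((K + K).+1 <= mdeg m)%N -> G@_m = 0.
  move=> m_big; apply/eqP; rewrite -normr_le0; apply/ler_addgt0Pr => e e_gt0.
  have [F [_ size_F F_close]] := approx e e_gt0.
  have F_m : F@_m = 0.
    apply/memN_msupp_eq0/msize_mdeg_ge; apply: leq_trans m_big.
    by rewrite (leq_trans size_F) // -addSn leq_addl.
  by move: (F_close m); rewrite F_m sub0r normrN add0r.
pose phi (mu : 'X_{1..n < (K + K).+1}) c := (@param_sumsq R n K c)@_mu.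
have [c c_G] : exists c, forall mu, phi mu c = G@_mu.
  apply: (quadratic_image_closed (phi := phi)).
  - by move=> mu; apply: continuous_mcoeff_param_sumsq.
  - by move=> mu a c; rewrite /phi param_sumsqZ mcoeffZ.
  - move=> c c_zero; apply/param_sumsq_eq0/eq_param_sumsq => [mu | m _].
      by rewrite mcoeff0; apply: c_zero.
    exact: mcoeff0.
  - move=> eps eps_gt0; have [F [sos_F size_F F_close]] := approx eps eps_gt0.
    have [|c F_c] := param_sumsq_surj (k := K) sos_F.
      by rewrite (leq_trans size_F) // -addSn leq_addl.
    by exists c => mu; rewrite /phi -F_c.
by rewrite -(eq_param_sumsq c_G G_out); apply: sos_param_sumsq.
Qed.

Lemma norm_exprB_eqn_le (R : realFieldType) (t : R) (a b : nat) :
  0 <= t <= 1 -> (a <= b)%N -> `|t ^+ (b - a) - (b == a)%:R| <= t.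
Proof.
move=> /andP [t_ge0 t_le1] a_le_b; have [-> | b_neq_a] := eqVneq b a.
  by rewrite subnn expr0 subrr normr0.
rewrite subr0 ger0_norm ?exprn_ge0 //.
have : (0 < b - a)%N by rewrite subn_gt0 ltn_neqAle eq_sym b_neq_a.
by case: (b - a)%N => // k _; rewrite exprS ler_piMr ?exprn_ile1.
Qed.

Lemma norm_mcoeff_xscale_lowest_le (R : realFieldType) n i a (t : R)
    (g : {mpoly R[n]}) mu :
  0 < t <= 1 -> (forall mu, mu \in msupp g -> (a <= mu i)%N) ->
  `|(t ^- a *: mscale (xscale i t) g)@_mu - (mpart (fun mu => mu i == a) g)@_mu|
    <= t * `|g@_mu|.
Proof.
move=> /andP [t_gt0 t_le1] a_min; rewrite mcoeffZ mcoeff_mscale_xscale mcoeff_mpart.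
have [-> | g_mu_neq0] := eqVneq g@_mu 0; first by rewrite !(mulr0, mul0r, subrr, normr0).
have a_le : (a <= mu i)%N by apply: a_min; rewrite mcoeff_msupp.
rewrite mulrCA [_ ^- a * _]mulrC -exprB ?unitfE ?(gt_eqF t_gt0) // -mulrBr normrM mulrC.
rewrite ler_pM2r ?normr_gt0 //.
by apply: norm_exprB_eqn_le => //; rewrite (ltW t_gt0) t_le1.
Qed.

Lemma norm_mcoeffM_le (R : numDomainType) n K (p q : {mpoly R[n]}) (e : R) mu :
  (msize p <= K)%N -> (msize q <= K)%N -> (forall m, `|p@_m| <= e) ->
  `|(p * q)@_mu| <= e * \sum_(m : 'X_{1..n < K}) \sum_(m' : 'X_{1..n < K}) `|q@_m'|.
Proof.
move=> size_p size_q p_le.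
rewrite {1}(mpolywE size_p) {1}(mpolywE size_q) mulr_suml mcoeff_sum mulr_sumr.
apply: le_trans (ler_norm_sum _ _ _) _; apply: ler_sum => m _.
rewrite mulr_sumr mcoeff_sum mulr_sumr.
apply: le_trans (ler_norm_sum _ _ _) _; apply: ler_sum => m' _.
rewrite -scalerAl -scalerAr scalerA -mpolyXD mcoeffZ mcoeffX !normrM.
apply: (@le_trans _ _ (`|p@_m| * `|q@_m'|)); last by rewrite ler_wpM2r.
by rewrite -[X in _ <= X]mulr1 ler_wpM2l ?mulr_ge0 //; case: eqP; rewrite ?normr1 ?normr0.
Qed.

Section UniformMultipliers.
Variables (R : realType) (n deg : nat).
Implicit Types (g h p q : {mpoly R[n]}).

Definition sos_multiplier g := forall q, in_P deg q -> sos (g * q).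

Lemma sos_multiplier_mscale (c : R) u v g : 0 <= c -> (forall i, u i * v i = 1) ->
  sos_multiplier g -> sos_multiplier (c *: mscale v g).
Proof.
move=> c_ge0 uv1 g_mult q q_P; rewrite -scalerAl; apply: sosZ => //.
by have := sos_mscale v (g_mult _ (in_P_mscale u q_P)); rewrite mscaleM mscaleK.
Qed.

Lemma sos_multiplier_closed K g : (msize g <= K)%N ->
  (forall eps : R, 0 < eps -> exists h, [/\ sos_multiplier h, (msize h <= K)%N &
     forall mu, `|h@_mu - g@_mu| <= eps]) ->
  sos_multiplier g.
Proof.
move=> size_g approx q q_P.
pose L := maxn K (msize q).
pose C := \sum_(m : 'X_{1..n < L}) \sum_(m' : 'X_{1..n < L}) `|q@_m'|.
have C_ge0 : 0 <= C by do 2![apply: sumr_ge0 => ? _].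
apply: (@sos_closed _ _ (L + L).+1) => eps eps_gt0.
have [|h [h_mult size_h h_close]] := approx (eps / (C + 1)).
  by rewrite divr_gt0 // ltr_wpDl.
exists (h * q); split; first exact: h_mult.
  rewrite (leq_trans (msizeM_le _ _)) // ltnS leq_add ?leq_maxr //.
  by rewrite (leq_trans size_h) ?leq_maxl.
move=> mu; rewrite -mcoeffB -mulrBl.
have size_hg : (msize (h - g) <= L)%N.
  by rewrite (leq_trans (msizeD_le _ _)) // msizeN geq_max !(leq_trans _ (leq_maxl _ _)).
have hg_le m : `|(h - g)@_m| <= eps / (C + 1) by rewrite mcoeffB.
apply: le_trans (norm_mcoeffM_le _ size_hg (leq_maxr K (msize q)) hg_le) _.
by rewrite -/C mulrAC ler_pdivrMr ?ltr_wpDl // ler_pM2l // lerDl.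
Qed.

Lemma sos_multiplier_mpart i a g : (forall mu, mu \in msupp g -> (a <= mu i)%N) ->
  sos_multiplier g -> sos_multiplier (mpart (fun mu => mu i == a) g).
Proof.
move=> a_min g_mult; set g0 := mpart _ g.
have g0_supp : {subset msupp g0 <= msupp g}.
  by move=> mu; rewrite !mcoeff_msupp mcoeff_mpart mulf_eq0 negb_or => /andP [].
apply: (sos_multiplier_closed (msize_le_msupp g0_supp)) => eps eps_gt0.
pose B := \sum_(mu <- msupp g) `|g@_mu|.
pose t := Num.min 1 (eps / (B + 1)).
have t_gt0 : 0 < t by rewrite lt_min ltr01 divr_gt0 // ltr_wpDl // sumr_ge0.
have t_le1 : t <= 1 by rewrite ge_min lexx.
have tB_le : t * B <= eps.
  have B_ge0 : 0 <= B by rewrite sumr_ge0.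
  apply: le_trans (ler_wpM2r B_ge0 (_ : t <= eps / (B + 1))) _; first by rewrite ge_min lexx orbT.
  by rewrite mulrAC ler_pdivrMr ?ltr_wpDl // ler_pM2l // lerDl.
exists (t ^- a *: mscale (xscale i t) g); split.
- apply: (sos_multiplier_mscale (u := xscale i t^-1)) g_mult.
    by rewrite invr_ge0 exprn_ge0 // ltW.
  by move=> j; rewrite /xscale; case: eqP; rewrite ?mulr1 // mulVf ?gt_eqF.
- apply: msize_le_msupp => mu; rewrite !mcoeff_msupp mcoeffZ mcoeff_mscale_xscale.
  by rewrite !mulf_eq0 !negb_or => /and3P [].
move=> mu; apply: le_trans (norm_mcoeff_xscale_lowest_le mu _ a_min) _.
  by rewrite t_gt0 t_le1.
by apply: le_trans tB_le; rewrite ler_pM2l // norm_mcoeff_le_sum.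
Qed.

Lemma sos_multiplier_lowest i g : g != 0 -> sos_multiplier g ->
  exists g', [/\ g' != 0, sos_multiplier g', {subset msupp g' <= msupp g} &
    exists a, forall mu, mu \in msupp g' -> mu i = a].
Proof.
move=> g_neq0 g_mult.
have ex_exp : exists a, has (fun mu : 'X_{1..n} => mu i == a) (msupp g).
  by exists (mlead g i); apply/hasP; exists (mlead g); rewrite ?mlead_supp.
case: (ex_minnP ex_exp) => a /hasP [mu0 mu0_supp /eqP mu0_a] a_min.
exists (mpart (fun mu => mu i == a) g); split.
- apply: contraTneq mu0_supp => /(congr1 (mcoeff mu0)).
  by rewrite mcoeff_mpart mu0_a eqxx mulr1 mcoeff0 => /eqP; rewrite mcoeff_eq0.
- by apply: sos_multiplier_mpart g_mult => mu mu_supp; apply/a_min/hasP; exists mu.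
- by move=> mu; rewrite !mcoeff_msupp mcoeff_mpart mulf_eq0 negb_or => /andP [].
exists a => mu; rewrite mcoeff_msupp mcoeff_mpart mulf_eq0 negb_or => /andP [_].
by apply: contraNeq => /negPf ->.
Qed.

Lemma sos_multiplier_monomial g : g != 0 -> sos_multiplier g ->
  exists c (al : 'X_{1..n}), c != 0 /\ sos_multiplier (c *: 'X_[al]).
Proof.
move=> g_neq0 g_mult.
suff [g' [g'_neq0 g'_mult g'_exps]] : exists g', [/\ g' != 0, sos_multiplier g' &
    forall i : 'I_n, exists a, forall mu, mu \in msupp g' -> mu i = a].
  exists g'@_(mlead g'), (mlead g'); rewrite -mpolyE_monomial //.
  by rewrite mleadc_eq0.
suff /(_ n (leqnn n)) [g' [? ? g'_exps]] : forall k, (k <= n)%N -> exists g',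
    [/\ g' != 0, sos_multiplier g' &
     forall i : 'I_n, (i < k)%N -> exists a, forall mu, mu \in msupp g' -> mu i = a].
  by exists g'; split=> // i; apply: g'_exps.
elim=> [_ | k IH k_lt_n]; first by exists g.
have [g1 [g1_neq0 g1_mult g1_exps]] := IH (ltnW k_lt_n).
have [g2 [g2_neq0 g2_mult g2_supp [a g2_exp]]] :=
  sos_multiplier_lowest (Ordinal k_lt_n) g1_neq0 g1_mult.
exists g2; split=> // i; rewrite ltnS leq_eqVlt => /orP [/eqP i_k | i_lt_k].
  have -> : i = Ordinal k_lt_n by apply: val_inj.
  by exists a; exact: g2_exp.
by have [b g1_exp] := g1_exps i i_lt_k; exists b => mu /g2_supp /g1_exp.
Qed.

Lemma sos_multiplier_scaleX_gt0 (c : R) (al : 'X_{1..n}) :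
  (0 < n)%N -> ~~ odd deg -> c != 0 -> sos_multiplier (c *: 'X_[al]) -> 0 < c.
Proof.
move=> n_gt0 deg_even c_neq0 mult.
have [s sumE] := mult _ (in_P_Xn _ (Ordinal n_gt0) deg_even).
apply: (sumsq_scaleX_gt0 (s := s) (m := (al + U_(Ordinal n_gt0) *+ deg)%MM)) c_neq0.
by rewrite -sumE -scalerAl mpolyXn -mpolyXD.
Qed.

Lemma sos_multiplier_even_monomial (c : R) (al : 'X_{1..n}) p :
  0 < c -> (forall i, ~~ odd (al i)) -> sos_multiplier (c *: 'X_[al]) ->
  in_P deg p -> sos p.
Proof.
move=> c_gt0 al_even mult p_P; apply: (sos_mulX_even al_even).
have c_inv_ge0 : 0 <= c^-1 by rewrite invr_ge0 ltW.
have := sosZ c_inv_ge0 (mult p p_P).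
by rewrite -scalerAl scalerA mulVf ?gt_eqF // scale1r.
Qed.

Lemma sos_multiplier_odd_monomial (c : R) (al : 'X_{1..n}) i p :
  c != 0 -> odd (al i) -> sos_multiplier (c *: 'X_[al]) -> in_P deg p -> p = 0.
Proof.
move=> c_neq0 al_odd mult p_P; set g := c *: 'X_[al].
pose v := xscale i (-1 : R).
have v_flip : mscale v g = - g.
  apply/mpolyP => mu; rewrite mcoeff_mscale_xscale mcoeffN mcoeffZ mcoeffX.
  case: eqP => [<- | _]; last by rewrite !(mulr0, mul0r, oppr0).
  by rewrite mulr1 -signr_odd al_odd mulrN1.
have [s1 sum1] := mult p p_P.
have [s2 sum2] : sos (- g * p).
  have := sos_mscale v (mult _ (in_P_mscale v p_P)).
  by rewrite mscaleM v_flip mscaleK // => j; rewrite /v /xscale; case: eqP; rewrite ?mulrNN mulr1.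
have sum0 : \sum_(h <- s1 ++ s2) h ^+ 2 = 0.
  by rewrite big_cat /= -sum1 -sum2 mulNr subrr.
have /eqP : g * p = 0.
  rewrite sum1 big_seq big1 // => h h_s1.
  by rewrite (sumsq_eq0 sum0 (h := h)) ?expr0n ?mem_cat ?h_s1.
by rewrite mulf_eq0 scaler_eq0 (negPf c_neq0) (negPf (mpolyX_neq0 _ al)) /= => /eqP.
Qed.

End UniformMultipliers.

Theorem theorem1 (R : realType) (n m : nat) :
  (1 <= n)%N -> (0 < m)%N -> ~~ odd m ->
  (exists p : {mpoly R[n]}, in_Delta m p) ->
  ~ (exists (d : nat) (h : {mpoly R[n]}),
        h \is d.-homog /\ h != 0 /\
        forall p : {mpoly R[n]}, in_P m p -> sos (h * p)).
Proof.
move=> n_gt0 _ m_even [p [p_P p_nsos]] [d [h [_ [h_neq0 h_mult]]]].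
have [c [al [c_neq0 al_mult]]] := sos_multiplier_monomial h_neq0 h_mult.
have [/forallP al_even | /forallPn [i /negPn al_odd]] := boolP [forall i, ~~ odd (al i)].
  apply/p_nsos/(sos_multiplier_even_monomial _ al_even al_mult p_P).
  exact: sos_multiplier_scaleX_gt0 n_gt0 m_even c_neq0 al_mult.
by apply: p_nsos; rewrite (sos_multiplier_odd_monomial c_neq0 al_odd al_mult p_P); exact: sos0.
Qed.
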